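(* Let $\epsilon\in(0,1]$ and $\mathcal{A}(\epsilon)=\{0,\epsilon,2\epsilon,\dots,\lfloor 1/\epsilon\rfloor\epsilon,1\}$. Let $f(p)=R(p,\alpha p,\hat{\mathcal{M}}^\ast(p,\alpha p))$ for $p\in[0,1]$, and assume $f$ is $\beta$-Lipschitz on $[0,1]$. Let $p_{\mathrm{DS}}^\ast$ be a maximizer of $f$ over $\mathcal{A}(\epsilon)$ and $q_{\mathrm{DS}}^\ast=\alpha p_{\mathrm{DS}}^\ast$. Let $(p^\ast,q^\ast,\mathcal{M}^\ast)$ be an optimal solution of Problem 1 (assumed to exist). Then $$R(p_{\mathrm{DS}}^\ast,q_{\mathrm{DS}}^\ast,\hat{\mathcal{M}}^\ast(p_{\mathrm{DS}}^\ast,q_{\mathrm{DS}}^\ast))\ \ge\ \Big(1-\frac1e\Big)R(p^\ast,q^\ast,\mathcal{M}^\ast)-\beta\epsilon.$$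
   Context: Let $\mathcal{G}=(\mathcal{U},\mathcal{E})$ be a finite directed graph without self-loops, $\mathcal{U}=\{1,\dots,U\}$. For $u,v\in\mathcal{U}$, $D(u,v;\mathcal{G})$ denotes the number of edges of a shortest directed path from $u$ to $v$ in $\mathcal{G}$, with $D(u,v;\mathcal{G})=+\infty$ if there is no such path. For an integer $d\ge0$, the $d$-visible set of $u$ is $\mathcal{V}(u,d;\mathcal{G})=\{v\in\mathcal{U}: D(v,u;\mathcal{G})\le d\}$. Fix an integer social visibility threshold $\tau\ge1$. Let $\mathcal{R}\subseteq\mathcal{U}$ (requesters) and $\mathcal{S}\subseteq\mathcal{U}$ (suppliers) be disjoint. Each requester $u\in\mathcal{R}$ has a valuation $p_u\in[0,1]$ and each supplier $u\in\mathcal{S}$ has a valuation $q_u\in[0,1]$. Let $b$ be a positive integer (budget) and $\alpha\in(0,1)$. For $p\in[0,1]$ let $\widetilde{R}(p)=\{u\in\mathcal{R}: p_u\ge p\}$ and for $q\in[0,1]$ let $\widetilde{S}(q)=\{u\in\mathcal{S}: q_u\le q\}$. For $\mathcal{M}\subseteq\mathcal{S}$ let $\widetilde{G}(p,\mathcal{M})$ be the graph obtained from $\mathcal{G}$ by adding a directed edge from every $s\in\mathcal{M}$ to every $r\in\widetilde{R}(p)$. For $u\in\widetilde{R}(p)$ let $I_u(p,\mathcal{M})=|\mathcal{V}(u,\tau;\widetilde{G}(p,\mathcal{M}))\setminus\mathcal{V}(u,\tau;\mathcal{G})|$, and $I(p,\mathcal{M})=\sum_{u\in\widetilde{R}(p)}I_u(p,\mathcal{M})$.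 The revenue is $R(p,q,\mathcal{M})=p\,I(p,\mathcal{M})-q\,I(p,\mathcal{M})$. Problem 1: maximize $R(p,q,\mathcal{M})$ over $p,q\in[0,1]$ and $\mathcal{M}$ subject to $q=\alpha p$, $\mathcal{M}\subseteq\widetilde{S}(q)$, $|\mathcal{M}|\le b$. The greedy procedure \texttt{OptSupplierSet}$(p,q)$: start with $\mathcal{M}=\emptyset$; for $t=1,\dots,b$, pick $u^\ast\in\widetilde{S}(q)$ maximizing $R(p,q,\mathcal{M}\cup\{u\})-R(p,q,\mathcal{M})$ (ties broken arbitrarily) and set $\mathcal{M}\leftarrow\mathcal{M}\cup\{u^\ast\}$; output $\hat{\mathcal{M}}^\ast(p,q)=\mathcal{M}$. *)

From HB Require Import structures.
From mathcomp Require Import all_boot all_order all_algebra.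
From mathcomp Require Import reals.
From mathcomp.analysis Require Import sequences exp.
Set Implicit Arguments. Unset Strict Implicit. Unset Printing Implicit Defensive.
Import Order.TTheory GRing.Theory Num.Theory.
Local Open Scope ring_scope.

Section Model.
Variables (R : realType) (T : finType).

(* d-visible set of u in the directed graph with edge relation g:
   all v such that there is a directed walk v -> ... -> u with at most d
   edges, i.e. D(v,u;g) <= d. *)
Definition visible (g : rel T) (d : nat) (u : T) : {set T} :=
  [set v | [exists k : 'I_d.+1, exists s : k.-tuple T,
              path g v s && (last v s == u)]].

Variables (e : rel T) (tau : nat) (Rq Sp : {set T}) (pv qv : T -> R).

Definition Rtil (p : R) : {set T} := [set u in Rq | p <= pv u].
Definition Stil (q : R) : {set T} := [set u in Sp | qv u <= q].

Definition aug (p : R) (M : {set T}) : rel T :=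
  fun x y => e x y || ((x \in M) && (y \in Rtil p)).

Definition Iu (p : R) (M : {set T}) (u : T) : nat :=
  #|visible (aug p M) tau u :\: visible e tau u|.

Definition Itot (p : R) (M : {set T}) : nat := (\sum_(u in Rtil p) Iu p M u)%N.

Definition Rev (p q : R) (M : {set T}) : R :=
  p * (Itot p M)%:R - q * (Itot p M)%:R.

(* If \tilde S(q) is empty no
   element can be picked and the set is left unchanged. *)
Definition greedy_step (p q : R) (M M' : {set T}) : Prop :=
  (exists2 u, u \in Stil q &
     M' = u |: M /\
     (forall v, v \in Stil q ->
        Rev p q (v |: M) - Rev p q M <= Rev p q (u |: M) - Rev p q M))
  \/ (Stil q = set0 /\ M' = M).

(* M is a possible output of t rounds of OptSupplierSet(p,q) (for some
   tie-breaking). *)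
Fixpoint greedy_out (p q : R) (t : nat) (M : {set T}) : Prop :=
  match t with
  | 0%N => M = set0
  | t'.+1 => exists M0, greedy_out p q t' M0 /\ greedy_step p q M0 M
  end.

Definition feasible (alpha : R) (b : nat) (p q : R) (M : {set T}) : Prop :=
  [/\ 0 <= p <= 1, 0 <= q <= 1, q = alpha * p, M \subset Stil q & (#|M| <= b)%N].

Definition optimal (alpha : R) (b : nat) (p q : R) (M : {set T}) : Prop :=
  feasible alpha b p q M /\
  forall p' q' M', feasible alpha b p' q' M' -> Rev p' q' M' <= Rev p q M.

End Model.

Definition grid (R : realType) (eps p : R) : Prop :=
  (exists k : nat, (k <= `|Num.floor (eps^-1)|)%N /\ p = k%:R * eps) \/ p = 1.

From HB Require Import structures.
From mathcomp Require Import all_boot all_order all_algebra.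
From mathcomp Require Import reals zify ring lra.
From mathcomp.analysis Require Import sequences exp.
Import Order.TTheory GRing.Theory Num.Theory.
Local Open Scope ring_scope.
Set Implicit Arguments. Unset Strict Implicit. Unset Printing Implicit Defensive.

(* The argument has two independent halves.
   1. Greedy half.  Write I_p(M) for the influence I(p,M), so that
      R(p,q,M) = (p - q) I_p(M).  Since every s in M is joined to every
      requester r of R~(p), a walk of the augmented graph that uses new edges
      can be shortcut to a single new edge s0 -> r, from the source of its
      first new edge to the target of its last one; so it becomes a walk of
      the graph augmented by {s0} alone.  This gives the coverage
      inequality  I_p(M u S) - I_p(M) <= sum_{v in S} (I_p(v + M) - I_p(M)),
      which together with monotonicity is all that the classical greedy
      analysis needs: each greedy round shrinks the gap to any feasible S by a
      factor (1 - 1/b), and (1 - 1/b)^b <= 1/e.  Hence, for an optimal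
      solution (po, qo, Mo) of Problem 1, f(po) >= (1 - 1/e) R(po, qo, Mo).
   2. Grid half.  po lies within eps above some grid point g, so by the
      Lipschitz assumption f(g) >= f(po) - beta eps, and f(pDS) >= f(g). *)

Lemma visibleP (T : finType) (g : rel T) (d : nat) (u v : T) :
  reflect (exists s : seq T, [/\ (size s <= d)%N, path g v s & last v s = u])
          (v \in visible g d u).
Proof.
rewrite inE; apply: (iffP existsP).
- case=> k /existsP [s /andP [ps /eqP ls]]; exists (tval s); split=> //.
  by rewrite size_tuple -ltnS ltn_ord.
- case=> s [sz ps ls]; exists (Ordinal (n:=d.+1) (m:=size s) sz).
  by apply/existsP; exists (in_tuple s); rewrite ps ls eqxx.
Qed.

Lemma visible_sub (T : finType) (g g' : rel T) (d : nat) (u v : T) :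
  subrel g g' -> v \in visible g d u -> v \in visible g' d u.
Proof.
move=> gg' /visibleP [s [sz ps ls]]; apply/visibleP; exists s.
by split=> //; exact: sub_path ps.
Qed.

Lemma card_bigcup_le (I T : finType) (S : {set I}) (F : I -> {set T}) :
  (#|\bigcup_(i in S) F i| <= \sum_(i in S) #|F i|)%N.
Proof.
elim/big_ind2: _ => [|A1 n1 A2 n2 h1 h2|//]; first by rewrite cards0.
exact: leq_trans (leq_card_setU _ _) (leq_add h1 h2).
Qed.

Section Augmentation.
Variables (R : realType) (T : finType) (e : rel T) (Rq : {set T}) (pv : T -> R).
Variable p : R.

Local Notation aug := (aug e Rq pv p).

Lemma aug_mono (M M' : {set T}) : M \subset M' -> subrel (aug M) (aug M').
Proof.
move=> sMM' x y /orP [exy|/andP [xM yR]]; first by rewrite /aug exy.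
by rewrite /aug (subsetP sMM' _ xM) yR orbT.
Qed.

Lemma e_aug (M : {set T}) : subrel e (aug M).
Proof. by move=> x y exy; rewrite /aug exy. Qed.

(* A walk of the augmented graph either is a walk of the original graph, or
   shortcuts to an original walk to some s0 in M (the source of its first new
   edge), a new edge s0 -> r (r the target of its last new edge), and an
   original walk from r to the same endpoint, with no more edges in total. *)
Lemma aug_walk_split (M : {set T}) (v : T) (s : seq T) : path (aug M) v s ->
  path e v s \/
  exists s0 r a c, [/\ s0 \in M, r \in Rtil Rq pv p, path e v a & last v a = s0]
    /\ [/\ path e r c, last r c = last v s & (size a + (size c).+1 <= size s)%N].
Proof.
elim: s v => [|x s IH] v /=; first by left.
case/andP=> /orP [evx|/andP [vM xR]] /IH [ps|[s0 [r [a [c [[s0M rR pa la] [pc lc sz]]]]]]].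
- by left; rewrite evx ps.
- by right; exists s0, r, (x :: a), c; rewrite /= evx pa.
- by right; exists v, x, [::], s.
- by right; exists v, r, [::], c; do 2 split=> //=; lia.
Qed.

Lemma visible_aug_split (M : {set T}) (d : nat) (u x : T) :
  x \in visible (aug M) d u ->
  x \in visible e d u \/ exists2 s0, s0 \in M & x \in visible (aug [set s0]) d u.
Proof.
move=> /visibleP [s [sz ps ls]].
case: (aug_walk_split ps) => [pe|[s0 [r [a [c [[s0M rR pa la] [pc lc sz']]]]]]].
  by left; apply/visibleP; exists s.
right; exists s0 => //; apply/visibleP; exists (a ++ r :: c); split.
- by rewrite size_cat /=; lia.
- rewrite cat_path /= la (sub_path (@e_aug _) pa) (sub_path (@e_aug _) pc).
  by rewrite /aug inE eqxx rR orbT.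
- by rewrite last_cat /= lc ls.
Qed.

End Augmentation.

Section Coverage.
Variables (R : realType) (T : finType) (e : rel T) (tau : nat) (Rq : {set T}).
Variables (pv : T -> R) (p : R).

Definition newly_visible (M : {set T}) (u : T) : {set T} :=
  visible (aug e Rq pv p M) tau u :\: visible e tau u.

Lemma newly_visible_mono (M M' : {set T}) (u : T) :
  M \subset M' -> newly_visible M u \subset newly_visible M' u.
Proof.
move=> sMM'; apply/subsetP => x; rewrite !in_setD => /andP [-> /=].
exact/visible_sub/aug_mono.
Qed.

Lemma newly_visible_cover (M S : {set T}) (u : T) :
  newly_visible (M :|: S) u :\: newly_visible M u
    \subset \bigcup_(v in S) (newly_visible (v |: M) u :\: newly_visible M u).
Proof.
apply/subsetP => x; rewrite !in_setD => /andP [xnB /andP [xnV xA]].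
case: (visible_aug_split xA) => [xV|[s0 s0MS xs0]]; first by rewrite xV in xnV.
have s0M : s0 \notin M.
  apply: contra xnB => s0M; rewrite xnV /=.
  by apply: visible_sub xs0; apply: aug_mono; rewrite sub1set.
move: s0MS; rewrite in_setU (negbTE s0M) /= => s0S.
apply/bigcupP; exists s0 => //; rewrite !in_setD xnB xnV /=.
by apply: visible_sub xs0; apply: aug_mono; rewrite sub1set setU11.
Qed.

Local Notation Iu := (Iu e tau Rq pv p).
Local Notation Itot := (Itot e tau Rq pv p).

Lemma Iu_cover (M S : {set T}) (u : T) :
  (Iu (M :|: S) u)%:R - (Iu M u)%:R
    <= \sum_(v in S) ((Iu (v |: M) u)%:R - (Iu M u)%:R) :> R.
Proof.
have gain (A B : {set T}) : A \subset B ->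
    (#|newly_visible B u| - #|newly_visible A u| =
     #|newly_visible B u :\: newly_visible A u|)%N.
  by move=> sAB; rewrite cardsDS // newly_visible_mono.
have le_gain (A B : {set T}) : A \subset B -> (Iu A u <= Iu B u)%N.
  by move=> sAB; apply/subset_leq_card/newly_visible_mono.
have cover_nat : (Iu (M :|: S) u - Iu M u <= \sum_(v in S) (Iu (v |: M) u - Iu M u))%N.
  rewrite /Iu -/(newly_visible _ u) gain ?subsetUl //.
  apply: leq_trans (subset_leq_card (newly_visible_cover M S u)) _.
  apply: leq_trans (card_bigcup_le _ _) _.
  by apply/eq_leq/eq_bigr => v _; rewrite gain ?subsetUr.
rewrite -(natrB _ (le_gain _ _ (subsetUl M S))).
under eq_bigr => v _ do rewrite -(natrB _ (le_gain _ _ (subsetUr [set v] M))).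
by rewrite -natr_sum ler_nat.
Qed.

Lemma Itot_cover (M S : {set T}) :
  (Itot (M :|: S))%:R - (Itot M)%:R
    <= \sum_(v in S) ((Itot (v |: M))%:R - (Itot M)%:R) :> R.
Proof.
rewrite /Itot !natr_sum -sumrB.
under [X in _ <= X]eq_bigr => v _ do rewrite natr_sum -sumrB.
by rewrite exchange_big /=; apply: ler_sum => u _; exact: Iu_cover.
Qed.

Lemma Itot_mono (M M' : {set T}) : M \subset M' -> (Itot M <= Itot M')%N.
Proof. by move=> sMM'; apply: leq_sum => u _; apply/subset_leq_card/newly_visible_mono. Qed.

End Coverage.

Section GreedyStep.
Variables (R : realFieldType) (T : finType) (F : {set T} -> R).
Hypothesis F_mono : forall M M' : {set T}, M \subset M' -> F M <= F M'.
Hypothesis F_cover : forall M S : {set T},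
  F (M :|: S) - F M <= \sum_(v in S) (F (v |: M) - F M).

Lemma greedy_gap_step (b : nat) (C S M : {set T}) (u : T) :
  (0 < b)%N -> S \subset C -> (#|S| <= b)%N ->
  (forall v, v \in C -> F (v |: M) - F M <= F (u |: M) - F M) ->
  F S - F (u |: M) <= (1 - b%:R^-1) * (F S - F M).
Proof.
move=> b0 sSC Sb umax.
set D := F S - F M; set d := F (u |: M) - F M.
have d0 : 0 <= d by rewrite subr_ge0 F_mono ?subsetUr.
have Dle : D <= b%:R * d.
  have S_MS : F S <= F (M :|: S) by rewrite F_mono ?subsetUr.
  have sum_le : \sum_(v in S) (F (v |: M) - F M) <= #|S|%:R * d.
    by rewrite mulr_natl -sumr_const; apply: ler_sum => v vS; apply/umax/(subsetP sSC).
  have := ler_wpM2r d0 (_ : #|S|%:R <= b%:R :> R); rewrite ler_nat => /(_ Sb).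
  have := F_cover M S; rewrite /D; lra.
have : D / b%:R <= d by rewrite ler_pdivrMr ?ltr0n // mulrC.
have -> : F S - F (u |: M) = D - d by rewrite /D /d; ring.
have -> : (1 - b%:R^-1) * D = D - D / b%:R by ring.
lra.
Qed.

End GreedyStep.

(* (1 - 1/b)^b <= 1/e, from 1 + x <= e^x. *)
Lemma pow_le_invexp (R : realType) (b : nat) :
  (0 < b)%N -> (1 - (b%:R : R)^-1) ^+ b <= (expR 1)^-1.
Proof.
move=> b0.
have y0 : 0 < (b%:R : R)^-1 by rewrite invr_gt0 ltr0n.
have by1 : b%:R * (b%:R : R)^-1 = 1 by rewrite mulfV // pnatr_eq0 -lt0n.
have y1 : (b%:R : R)^-1 <= 1 by rewrite invf_le1 ?ler1n ?ltr0n.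
rewrite -expRN -[X in expR (- X)]by1 -mulrN expRM_natl.
apply: lerXn2r; rewrite ?nnegrE ?expR_ge0 ?subr_ge0 //.
exact: expR_ge1Dx.
Qed.

Section Greedy.
Variables (R : realType) (T : finType) (e : rel T) (tau : nat) (Rq Sp : {set T}).
Variables (pv qv : T -> R).

Definition influence (p : R) (M : {set T}) : R := (Itot e tau Rq pv p M)%:R.

Lemma RevE (p q : R) (M : {set T}) : Rev e tau Rq pv p q M = (p - q) * influence p M.
Proof. by rewrite /Rev /influence mulrBl. Qed.

Lemma influence_ge0 (p : R) (M : {set T}) : 0 <= influence p M.
Proof. exact: ler0n. Qed.

Lemma influence_mono (p : R) (M M' : {set T}) :
  M \subset M' -> influence p M <= influence p M'.
Proof. by move=> sMM'; rewrite ler_nat Itot_mono. Qed.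

Lemma greedy_out_gap (p q : R) (b t : nat) (S M : {set T}) :
  q < p -> (0 < b)%N -> S \subset Stil Sp qv q -> (#|S| <= b)%N ->
  greedy_out e tau Rq Sp pv qv p q t M ->
  influence p S - influence p M <= (1 - b%:R^-1) ^+ t * influence p S.
Proof.
move=> qp b0 sS Sb; have S0 := influence_ge0 p S.
have y_le1 : 0 <= 1 - (b%:R : R)^-1 by rewrite subr_ge0 invf_le1 ?ler1n ?ltr0n.
elim: t M => [|t IH] M /=.
  by move=> ->; rewrite expr0 mul1r; have := influence_ge0 p set0; lra.
case=> M0 [/IH gap0 [[u uS [-> umax]] | [S_empty ->]]].
- have umax' v : v \in Stil Sp qv q ->
      influence p (v |: M0) - influence p M0 <= influence p (u |: M0) - influence p M0.
    by move/umax; rewrite !RevE -!mulrBr ler_pM2l ?subr_gt0.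
  apply: le_trans (greedy_gap_step (@influence_mono p) (@Itot_cover _ _ e tau Rq pv p)
                     b0 sS Sb umax') _.
  by rewrite exprS -mulrA ler_wpM2l.
- have -> : S = set0 by apply/eqP; rewrite -subset0 -S_empty.
  have := influence_mono p (sub0set M0).
  have := mulr_ge0 (exprn_ge0 t.+1 y_le1) (influence_ge0 p set0); lra.
Qed.

Lemma greedy_approx (p q : R) (b : nat) (S M : {set T}) :
  q <= p -> (0 < b)%N -> S \subset Stil Sp qv q -> (#|S| <= b)%N ->
  greedy_out e tau Rq Sp pv qv p q b M ->
  (1 - (expR 1)^-1) * Rev e tau Rq pv p q S <= Rev e tau Rq pv p q M.
Proof.
rewrite le_eqVlt => /orP [/eqP ->|qp] b0 sS Sb gM.
  by rewrite !RevE subrr !mul0r mulr0.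
have gap := greedy_out_gap qp b0 sS Sb gM.
have ex := ler_wpM2r (influence_ge0 p S) (pow_le_invexp R b0).
rewrite !RevE mulrCA; apply: ler_wpM2l; first by rewrite subr_ge0 ltW.
by rewrite mulrBl mul1r; lra.
Qed.

End Greedy.

Lemma grid_round_down (R : realType) (eps p : R) :
  0 < eps -> 0 <= p <= 1 -> exists2 g, grid eps g & 0 <= g <= p /\ p - g <= eps.
Proof.
move=> eps0 /andP [p0 p1]; have eps_ge0 := ltW eps0.
set z := p / eps; have zeps : z * eps = p by rewrite /z divfK ?gt_eqF.
have z0 : 0 <= z by rewrite divr_ge0.
have zle : z <= eps^-1 by rewrite ler_pdivrMr // mulVf ?gt_eqF.
have fl0 : 0 <= Num.floor z by rewrite floor_ge0.
have kE : (`|Num.floor z|%N%:R : R) = (Num.floor z)%:~R by rewrite natr_absz ger0_norm.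
have /andP [fl_le lt_fl] := floor_itv z; rewrite intrD -kE in fl_le lt_fl.
exists (`|Num.floor z|%N%:R * eps).
  left; exists `|Num.floor z|%N; split=> //.
  by have := le_floor zle; lia.
rewrite mulr_ge0 ?ler0n //= -!{1}zeps ler_wpM2r //= -mulrBl ler_piMl //; lra.
Qed.

Lemma lipschitz_const_ge0 (R : realType) (f : R -> R) (beta : R) :
  (forall x y, 0 <= x <= 1 -> 0 <= y <= 1 -> `|f x - f y| <= beta * `|x - y|) ->
  0 <= beta.
Proof.
move=> f_lip; have := f_lip 0 1; rewrite sub0r normrN normr1 mulr1 ler01 !lexx.
by move=> /(_ isT isT); apply: le_trans.
Qed.

Lemma grid_search_loss (R : realType) (f : R -> R) (eps beta p pDS : R) :
  0 < eps ->
  (forall x y, 0 <= x <= 1 -> 0 <= y <= 1 -> `|f x - f y| <= beta * `|x - y|) ->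
  (forall g, grid eps g -> f g <= f pDS) ->
  0 <= p <= 1 -> f p - beta * eps <= f pDS.
Proof.
move=> eps0 f_lip pDS_max p01.
have [g g_grid [/andP [g0 gp] pg]] := grid_round_down eps0 p01.
have g01 : 0 <= g <= 1 by rewrite g0 (le_trans gp (andP p01).2).
have dist : `|p - g| <= eps by rewrite ger0_norm ?subr_ge0.
have := ler_wpM2l (lipschitz_const_ge0 f_lip) dist.
have := f_lip _ _ p01 g01; rewrite ler_norml => /andP [_ near].
have := pDS_max g g_grid; lra.
Qed.

Theorem mainTheorem6 (R : realType) (T : finType) (e : rel T)
  (Rq Sp : {set T}) (pv qv : T -> R) (tau b : nat) (alpha eps beta : R)
  (Mhat : R -> {set T}) (pDS pstar qstar : R) (Mstar : {set T}) :
  irreflexive e ->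
  [disjoint Rq & Sp] ->
  (forall u, u \in Rq -> 0 <= pv u <= 1) ->
  (forall u, u \in Sp -> 0 <= qv u <= 1) ->
  (1 <= tau)%N -> (0 < b)%N ->
  0 < alpha < 1 ->
  0 < eps <= 1 ->
  (* Mhat p = \hat M^*(p, alpha p), an output of OptSupplierSet(p, alpha p) *)
  (forall p, greedy_out e tau Rq Sp pv qv p (alpha * p) b (Mhat p)) ->
  (* f is beta-Lipschitz on [0,1] *)
  (forall x y, 0 <= x <= 1 -> 0 <= y <= 1 ->
     `|Rev e tau Rq pv x (alpha * x) (Mhat x)
       - Rev e tau Rq pv y (alpha * y) (Mhat y)| <= beta * `|x - y|) ->
  (* pDS maximizes f over A(eps) *)
  grid eps pDS ->
  (forall p, grid eps p ->
     Rev e tau Rq pv p (alpha * p) (Mhat p)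
       <= Rev e tau Rq pv pDS (alpha * pDS) (Mhat pDS)) ->
  (* (pstar, qstar, Mstar) is an optimal solution of Problem 1 *)
  optimal e tau Rq Sp pv qv alpha b pstar qstar Mstar ->
  (1 - (expR 1)^-1) * Rev e tau Rq pv pstar qstar Mstar - beta * eps
    <= Rev e tau Rq pv pDS (alpha * pDS) (Mhat pDS).
Proof.
move=> _ _ _ _ _ b0 /andP [_ a1] /andP [eps0 _] Mhat_greedy f_lip _ pDS_max.
case=> [[pstar01 _ qstarE Mstar_sub Mstar_card] _].
set f := fun x => Rev e tau Rq pv x (alpha * x) (Mhat x).
have approx : (1 - (expR 1)^-1) * Rev e tau Rq pv pstar qstar Mstar <= f pstar.
  have qp : qstar <= pstar by case/andP: pstar01; rewrite qstarE; nra.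
  have := Mhat_greedy pstar; rewrite /f -qstarE.
  exact: greedy_approx qp b0 Mstar_sub Mstar_card.
have := grid_search_loss eps0 f_lip pDS_max pstar01.
by rewrite -/(f pstar) -/(f pDS); apply: le_trans; rewrite lerD2r.
Qed.
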